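(* Let $T$ be a search tree on a finite tree $\mathcal{T}$ and let $\mathcal{H}$ be a nonempty connected subgraph of $\mathcal{T}$. Then there is a unique search tree $T|_{\mathcal{H}}$ on $\mathcal{H}$ such that for every $v\in V(\mathcal{H})$, $$\mathtt{Path}_{T|_{\mathcal{H}}}(v)=\mathtt{Path}_T(v)\cap V(\mathcal{H}).$$
   Context: A search tree on a tree $\mathcal{T}$ is a rooted tree $T$ with vertex set $V(\mathcal{T})$ defined recursively: its root is an arbitrary vertex $r$, and the children of $r$ are the roots of search trees built on the connected components of $\mathcal{T}-r$; a single-vertex tree has only itself as search tree. For a rooted tree $T$ and vertex $v$, $\mathtt{Path}_T(v)$ is the set of vertices on the path in $T$ from the root to $v$, including both endpoints. *)

From Stdlib Require List.
From mathcomp Require Import all_boot.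
Set Implicit Arguments. Unset Strict Implicit. Unset Printing Implicit Defensive.

(* Graphs: vertices of a finType V, a vertex set A : {set V}, and an edge
   relation f : rel V (only edges between vertices of A are relevant). *)
Section Defs.
Variable V : finType.

Definition connected_on (f : rel V) (A : {set V}) : Prop :=
  forall x y, x \in A -> y \in A ->
    exists p : seq V, path f x p /\ last x p = y /\ all (fun z => z \in A) p.

Definition acyclic_on (f : rel V) (A : {set V}) : Prop :=
  ~ exists c : seq V, 3 <= size c /\ uniq c /\ cycle f c /\ all (fun z => z \in A) c.

Definition is_tree (f : rel V) (A : {set V}) : Prop :=
  (forall x y, f x y = f y x) /\ (forall x, ~~ f x x) /\
  A != set0 /\ connected_on f A /\ acyclic_on f A.

Definition is_comp (f : rel V) (B C : {set V}) : Prop :=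
  C \subset B /\ C != set0 /\ connected_on f C /\
  (forall x y, x \in C -> y \in B -> f x y -> y \in C).

(* Rooted trees with vertices labelled in V: a root and a list of subtrees
   (the order of the list is irrelevant, see same_rtree). *)
Inductive rtree : Type := Node of V & seq rtree.

Definition rroot (t : rtree) : V := let: Node r _ := t in r.

Fixpoint vlist (t : rtree) : seq V :=
  let: Node r ch := t in r :: flatten (map vlist ch).

Definition vset (t : rtree) : {set V} := [set x in vlist t].

Inductive search_tree (f : rel V) : {set V} -> rtree -> Prop :=
| ST_node (A : {set V}) (r : V) (ch : seq rtree) :
    r \in A ->
    (forall c, List.In c ch -> is_comp f (A :\ r) (vset c) /\ search_tree f (vset c) c) ->
    (forall C, is_comp f (A :\ r) C -> exists c, List.In c ch /\ vset c = C) ->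
    uniq (map vset ch) ->
    search_tree f A (Node r ch).

(* in_path t u v  <->  u \in Path_t(v): u lies on the path in t from the
   root to v (both endpoints included). *)
Inductive in_path : rtree -> V -> V -> Prop :=
| IP_root r ch v : v \in vlist (Node r ch) -> in_path (Node r ch) r v
| IP_child r ch c u v : List.In c ch -> in_path c u v -> in_path (Node r ch) u v.

Inductive child_of : rtree -> V -> V -> Prop :=
| CO_root r ch c : List.In c ch -> child_of (Node r ch) r (rroot c)
| CO_sub r ch c u w : List.In c ch -> child_of c u w -> child_of (Node r ch) u w.

(* equality of (unordered, vertex-labelled) rooted trees *)
Definition same_rtree (t1 t2 : rtree) : Prop :=
  vset t1 = vset t2 /\ rroot t1 = rroot t2 /\
  (forall u w, child_of t1 u w <-> child_of t2 u w).

End Defs.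

From Stdlib Require List.
From mathcomp Require Import all_boot.
Set Implicit Arguments. Unset Strict Implicit. Unset Printing Implicit Defensive.

(* A search tree is recovered from its ancestor relation: w is a child of u
   exactly when u is a proper ancestor of w and every ancestor of w other than
   w is an ancestor of u.  This gives uniqueness.  Existence is by induction on
   T, with root r and subtrees on the components C of T - r.  If r is not in H,
   the connected H lies in one component and we restrict the corresponding
   subtree.  If r is in H, acyclicity gives each C a single neighbour of r, so
   every nonempty V(H) ∩ C is connected and these sets are exactly the
   components of H - r; the restriction is r above the restrictions of the
   subtrees to them. *)

Section ListFacts.
Variables A B : Type.
Implicit Types (R : A -> B -> Prop) (la : seq A) (lb : seq B).

Lemma In_mem_map (T : eqType) (h : A -> T) la a : List.In a la -> h a \in map h la.
Proof. by elim: la => //= a0 la IH [->|/IH Ha]; rewrite inE ?eqxx ?Ha ?orbT. Qed.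

Lemma mem_map_In (T : eqType) (h : A -> T) la y :
  y \in map h la -> exists2 a, List.In a la & y = h a.
Proof.
elim: la => //= a0 la IH; rewrite inE => /orP[/eqP->|/IH[a Ha ->]].
- by exists a0; [left|].
- by exists a; [right|].
Qed.

Lemma In_map_inj (T : eqType) (h : A -> T) la a b :
  uniq (map h la) -> List.In a la -> List.In b la -> h a = h b -> a = b.
Proof.
elim: la => //= a0 la IH /andP[Ha0 Hu] [Ea|Ha] [Eb|Hb] Eh; subst => //.
- by move: Ha0; rewrite Eh (In_mem_map h Hb).
- by move: Ha0; rewrite -Eh (In_mem_map h Ha).
- exact: IH.
Qed.

Lemma Forall2_exists R la :
  (forall a, List.In a la -> exists b, R a b) -> exists lb, List.Forall2 R la lb.
Proof.
elim: la => [|a la IH] Hex; first by exists [::].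
have [b Hab] := Hex a (or_introl erefl).
have [lb Hlb] := IH (fun a' Ha' => Hex a' (or_intror Ha')).
by exists (b :: lb); constructor.
Qed.

Lemma Forall2_In_l R la lb a :
  List.Forall2 R la lb -> List.In a la -> exists2 b, List.In b lb & R a b.
Proof.
elim=> // a0 b0 {}la {}lb Hab _ IH /= [<-|/IH[b Hb HR]]; first by exists b0; [left|].
by exists b; [right|].
Qed.

Lemma Forall2_In_r R la lb b :
  List.Forall2 R la lb -> List.In b lb -> exists2 a, List.In a la & R a b.
Proof.
elim=> // a0 b0 {}la {}lb Hab _ IH /= [<-|/IH[a Ha HR]]; first by exists a0; [left|].
by exists a; [right|].
Qed.

Lemma Forall2_map (T : Type) (g : A -> T) (h : B -> T) R la lb :
  (forall a b, R a b -> h b = g a) -> List.Forall2 R la lb -> map h lb = map g la.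
Proof. by move=> Hgh; elim=> //= a b {}la {}lb /Hgh-> _ ->. Qed.

End ListFacts.

Section RootedTrees.
Variable V : finType.
Implicit Types (t c : rtree V) (ch : seq (rtree V)).

Fixpoint rtree_nested_ind (P : rtree V -> Prop)
    (HP : forall r ch, (forall c, List.In c ch -> P c) -> P (Node r ch)) t : P t :=
  let: Node r ch := t in
  HP r ch ((fix In_P (l : seq (rtree V)) : forall c, List.In c l -> P c :=
    match l with
    | [::] => fun c Hc => False_ind _ Hc
    | c0 :: l' => fun c Hc => match Hc with
      | or_introl E => eq_ind c0 P (rtree_nested_ind HP c0) c E
      | or_intror Hc' => In_P l' c Hc'
      end
    end) ch).

Lemma flatten_vlistP ch x :
  reflect (exists2 c, List.In c ch & x \in vlist c) (x \in flatten (map (@vlist V) ch)).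
Proof.
elim: ch => [|c0 ch IH] /=; first by right=> [[]].
rewrite mem_cat; apply: (iffP orP) => [[Hx|/IH[c Hc Hx]]|[c [<-|Hc] Hx]].
- by exists c0; [left|].
- by exists c; [right|].
- by left.
- by right; apply/IH; exists c.
Qed.

Lemma vlist_NodeP r ch x :
  reflect (x = r \/ exists2 c, List.In c ch & x \in vlist c) (x \in vlist (Node r ch)).
Proof.
rewrite /= inE; apply: (iffP orP) => [[/eqP|/flatten_vlistP]|[->|/flatten_vlistP]];
  by [left|right|rewrite eqxx; left|right].
Qed.

Lemma vsetE t x : (x \in vset t) = (x \in vlist t).
Proof. by rewrite inE. Qed.

Lemma rroot_vlist t : rroot t \in vlist t.
Proof. by case: t => r ch; rewrite /= mem_head. Qed.

Lemma in_path_rroot t v : v \in vlist t -> in_path t (rroot t) v.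
Proof. by case: t => r ch; constructor. Qed.

Lemma in_path_memr t u v : in_path t u v -> v \in vlist t.
Proof. by elim=> // r ch c {}u {}v Hc _ Hv; apply/vlist_NodeP; right; exists c. Qed.

Lemma in_path_meml t u v : in_path t u v -> u \in vlist t.
Proof.
elim=> [r ch {}v _|r ch c {}u {}v Hc _ Hu]; apply/vlist_NodeP; first by left.
by right; exists c.
Qed.

Lemma in_path_NodeP r ch u v :
  in_path (Node r ch) u v <->
  (u = r /\ v \in vlist (Node r ch)) \/ exists2 c, List.In c ch & in_path c u v.
Proof.
split=> [Hp|[[-> Hv]|[c Hc Hp]]]; last 2 first.
- exact: IP_root.
- exact: IP_child _ Hc Hp.
by inversion Hp; subst; [left|right; exists c].
Qed.

End RootedTrees.

Section Components.
Variable V : finType.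
Implicit Types (g : rel V) (B C D : {set V}).

Lemma all_last (T : eqType) (P : pred T) x p : P x -> all P p -> P (last x p).
Proof. by elim: p x => //= y p IH x _ /andP[Hy Hp]; apply: IH. Qed.

Lemma closed_path_all g B D x p :
  (forall y z, y \in D -> z \in B -> g y z -> z \in D) ->
  x \in D -> path g x p -> all (mem B) p -> all (mem D) p.
Proof.
move=> Dclosed; elim: p x => //= y p IH x Hx /andP[Hxy Hp] /andP[Hy HpB].
have HyD : y \in D by apply: Dclosed Hxy.
by rewrite HyD (IH y).
Qed.

Lemma comp_subset g B C D x :
  is_comp g B C -> is_comp g B D -> x \in C -> x \in D -> C \subset D.
Proof.
move=> [CB [_ [Cconn _]]] [_ [_ [_ Dclosed]]] HxC HxD; apply/subsetP => y HyC.
have [p [Hp [<- HpC]]] := Cconn x y HxC HyC.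
have HpB : all (mem B) p by apply/allP => z /(allP HpC); apply: (subsetP CB).
exact: (all_last HxD (closed_path_all Dclosed HxD Hp HpB)).
Qed.

Lemma comp_eq g B C D x : is_comp g B C -> is_comp g B D -> x \in C -> x \in D -> C = D.
Proof.
move=> HC HD HxC HxD; apply/eqP; rewrite eqEsubset.
by rewrite (comp_subset HC HD HxC HxD) (comp_subset HD HC HxD HxC).
Qed.

Definition rel_on g B : rel V := [rel y z | [&& g y z, y \in B & z \in B]].

Lemma rel_on_sym g B : symmetric g -> symmetric (rel_on g B).
Proof.
by move=> gsym y z; rewrite /rel_on /= gsym; case: (y \in B); rewrite ?andbT ?andbF.
Qed.

Lemma rel_on_path g B x p : path (rel_on g B) x p -> path g x p /\ all (mem B) p.
Proof.
elim: p x => //= y p IH x /andP[/and3P[Hxy _ Hy] /IH[Hp HpB]].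
by rewrite Hxy Hy Hp HpB.
Qed.

Lemma connect_rel_on_mem g B x y : connect (rel_on g B) x y -> x \in B -> y \in B.
Proof. by move=> /connectP[p /rel_on_path[_ HpB] ->] Hx; apply: all_last HpB. Qed.

Lemma comp_exists g B x : symmetric g -> x \in B -> exists2 C, is_comp g B C & x \in C.
Proof.
move=> gsym HxB; set h := rel_on g B.
have hsym : connect_sym h by apply/sym_connect_sym/rel_on_sym.
exists [set y | connect h x y]; last by rewrite inE connect0.
split; [|split; [|split]].
- by apply/subsetP => y; rewrite inE => /connect_rel_on_mem; apply.
- by apply/set0Pn; exists x; rewrite inE connect0.
- move=> y z; rewrite !inE => Hxy Hxz.
  have /connectP[p Hp ->] : connect h y z by rewrite (connect_trans _ Hxz) // hsym.
  exists p; have [Hpg _] := rel_on_path Hp; do 2!split => //.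
  apply/allP => w Hw; rewrite inE (connect_trans Hxy) //.
  have [i Hi ->] : exists2 i, i < size p & w = nth y p i.
    by exists (index w p); rewrite ?index_mem ?nth_index.
  apply/connectP; exists (take i.+1 p); first by rewrite take_path.
  by rewrite (last_nth y) size_takel //= nth_take.
- move=> y z; rewrite !inE => Hxy HzB Hyz; apply: (connect_trans Hxy); apply: connect1.
  by rewrite /h /rel_on /= Hyz HzB (connect_rel_on_mem Hxy HxB).
Qed.

End Components.

Section SearchTrees.
Variables (V : finType) (g : rel V).
Implicit Types (A : {set V}) (t c : rtree V) (ch : seq (rtree V)).

Lemma search_tree_Node A r ch : search_tree g A (Node r ch) ->
  [/\ r \in A,
      forall c, List.In c ch -> is_comp g (A :\ r) (vset c) /\ search_tree g (vset c) c,
      forall C, is_comp g (A :\ r) C -> exists c, List.In c ch /\ vset c = C &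
      uniq (map (@vset V) ch)].
Proof. by move=> Hst; inversion Hst; subst. Qed.

Lemma search_tree_vset A t : symmetric g -> search_tree g A t -> vset t = A.
Proof.
case: t => r ch gsym /search_tree_Node[HrA Hch Hcomps _]; apply/setP => x.
rewrite vsetE; apply/vlist_NodeP/idP => [[->|[c /Hch[[cA _] _] Hx]] //|HxA].
  by move: (subsetP cA x); rewrite vsetE inE => /(_ Hx)/andP[].
have [->|Hxr] := eqVneq x r; first by left.
have HxAr : x \in A :\ r by rewrite !inE Hxr.
have [C HC HxC] := comp_exists gsym HxAr.
have [c [Hc EC]] := Hcomps C HC; right; exists c => //.
by rewrite -vsetE EC.
Qed.

Lemma search_tree_child_uniq A r ch c c' x : search_tree g A (Node r ch) ->
  List.In c ch -> List.In c' ch -> x \in vlist c -> x \in vlist c' -> c = c'.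
Proof.
move=> /search_tree_Node[_ Hch _ Hu] Hc Hc' Hx Hx'; apply: (In_map_inj Hu Hc Hc').
have [HC _] := Hch c Hc; have [HC' _] := Hch c' Hc'.
by apply: (comp_eq HC HC' (x := x)); rewrite vsetE.
Qed.

Lemma search_tree_root_notin_child A r ch c :
  search_tree g A (Node r ch) -> List.In c ch -> r \notin vlist c.
Proof.
move=> /search_tree_Node[_ Hch _ _] /Hch[[cA _] _]; apply/negP => Hr.
by move: (subsetP cA r); rewrite vsetE Hr !inE eqxx => /(_ isT).
Qed.

Lemma in_path_to_root A t u : search_tree g A t -> in_path t u (rroot t) -> u = rroot t.
Proof.
case: t => r ch Hst /in_path_NodeP [[-> _]|[c Hc /in_path_memr]] //.
by rewrite (negbTE (search_tree_root_notin_child Hst Hc)).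
Qed.

End SearchTrees.

Section ParentsFromPaths.
Variables (V : finType) (g : rel V).
Implicit Types (A : {set V}) (t c : rtree V) (ch : seq (rtree V)).

Definition parent_by_paths t u w :=
  [/\ in_path t u w, u <> w & forall z, in_path t z w -> z = w \/ in_path t z u].

Lemma child_of_parent A t u w :
  search_tree g A t -> child_of t u w -> parent_by_paths t u w.
Proof.
move=> Hst Hcw; elim: Hcw A Hst => {t u w} [r ch c Hc|r ch c u w Hc _ IH] A Hst;
  have [_ Hch _ _] := search_tree_Node Hst; have [_ Hstc] := Hch c Hc.
- have Hr := search_tree_root_notin_child Hst Hc.
  split.
  + by apply: IP_root; apply/vlist_NodeP; right; exists c => //; apply: rroot_vlist.
  + by move=> Er; move: Hr; rewrite Er rroot_vlist.
  move=> z /in_path_NodeP[[-> _]|[c' Hc' Hz]].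
    by right; apply: IP_root; apply/vlist_NodeP; left.
  have Ec := search_tree_child_uniq Hst Hc' Hc (in_path_memr Hz) (rroot_vlist c).
  by subst c'; left; apply: in_path_to_root Hstc Hz.
- have [Hp Hne Hpar] := IH _ Hstc.
  split=> [||z /in_path_NodeP[[-> _]|[c' Hc' Hz]]].
  + exact: IP_child _ Hc Hp.
  + exact: Hne.
  + right; apply: IP_root; apply/vlist_NodeP; right.
    by exists c => //; apply: in_path_meml Hp.
  have Ec := search_tree_child_uniq Hst Hc' Hc (in_path_memr Hz) (in_path_memr Hp).
  by subst c'; case: (Hpar z Hz) => [->|Hzu]; [left|right; apply: IP_child _ Hc Hzu].
Qed.

Lemma parent_child_of A t u w :
  search_tree g A t -> parent_by_paths t u w -> child_of t u w.
Proof.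
elim/rtree_nested_ind: t A => r ch IH A Hst [Hp Hne Hpar].
have [_ Hch _ _] := search_tree_Node Hst.
case/in_path_NodeP: Hp => [[Eu /vlist_NodeP[Ew|[c Hc Hw]]]|[c Hc Hp]].
- by case: Hne; rewrite Eu Ew.
- subst u.
  have Hroot : in_path (Node r ch) (rroot c) w by apply: IP_child _ Hc (in_path_rroot Hw).
  case: (Hpar _ Hroot) => [<-|/(in_path_to_root Hst) /= Er]; first exact: CO_root.
  by move: (search_tree_root_notin_child Hst Hc); rewrite -Er rroot_vlist.
- have [_ Hstc] := Hch c Hc; apply: (CO_sub _ Hc); apply: (IH c Hc _ Hstc).
  split=> // z Hz; case: (Hpar z (IP_child _ Hc Hz)) => [->|/in_path_NodeP]; first by left.
  case=> [[Er _]|[c' Hc' Hzu]].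
    by move: (search_tree_root_notin_child Hst Hc); rewrite -Er (in_path_meml Hz).
  have Ec := search_tree_child_uniq Hst Hc' Hc (in_path_memr Hzu) (in_path_meml Hp).
  by subst c'; right.
Qed.

Lemma same_rtree_of_in_path A1 A2 t1 t2 :
  search_tree g A1 t1 -> search_tree g A2 t2 ->
  (forall u v, in_path t1 u v <-> in_path t2 u v) -> same_rtree t1 t2.
Proof.
move=> Hst1 Hst2 Ep.
have Ev v : (v \in vlist t1) = (v \in vlist t2).
  apply/idP/idP => /in_path_rroot Hv.
  - exact: in_path_memr ((Ep _ _).1 Hv).
  - exact: in_path_memr ((Ep _ _).2 Hv).
split; first by apply/setP => v; rewrite !vsetE.
split.
  apply/esym/(in_path_to_root Hst1)/Ep.
  by apply: in_path_rroot; rewrite -Ev rroot_vlist.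
have Epar u w : parent_by_paths t1 u w <-> parent_by_paths t2 u w.
  by rewrite /parent_by_paths; split=> -[/Ep Hp Hne Hz];
    split=> // z /Ep /Hz[->|/Ep]; auto.
move=> u w; split=> Hc.
- exact/(parent_child_of Hst2)/Epar/(child_of_parent Hst1).
- exact/(parent_child_of Hst1)/Epar/(child_of_parent Hst2).
Qed.

End ParentsFromPaths.

Section SubgraphOfTree.
Variables (V : finType) (e f : rel V).
Hypothesis esym : symmetric e.
Hypothesis eacyclic : acyclic_on e [set: V].
Hypothesis fsym : symmetric f.
Hypothesis f_sub_e : forall x y, f x y -> e x y.
Implicit Types (A C S : {set V}) (t c : rtree V) (ch : seq (rtree V)).

Lemma comp_unique_root_neighbour A r C a b :
  is_comp e (A :\ r) C -> a \in C -> b \in C -> e a r -> e b r -> a = b.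
Proof.
move=> [CAr [_ [Cconn _]]] HaC HbC Har Hbr; apply/eqP/negP => /negP Hab.
have CnotR z : z \in C -> z != r by move=> /(subsetP CAr); rewrite !inE => /andP[].
have [p [Hp [Hl HpC]]] := Cconn a b HaC HbC.
move: Hl; case: (shortenP Hp) => q Hq Hqu Hqp Hl.
(* Otherwise r, a and a shortest walk from a to b inside C close a cycle. *)
apply: eacyclic; exists [:: r, a & q]; split; last split; last split.
- by case: q {Hq Hqu Hqp} Hl => [/= Eab|] //; move: Hab; rewrite Eab eqxx.
- rewrite cons_uniq Hqu andbT inE negb_or eq_sym CnotR //=.
  by apply/negP => /Hqp /(allP HpC) /CnotR; rewrite eqxx.
- by rewrite /= rcons_path Hq Hl Hbr esym Har.
- by apply/allP => z _; rewrite in_setT.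
Qed.

Lemma walk_in_comp A r C x p :
  is_comp e (A :\ r) C -> x \in C -> path f x p -> all (mem (A :\ r)) p -> all (mem C) p.
Proof. by move=> [_ [_ [_ Cclosed]]] HxC /(sub_path f_sub_e); apply: closed_path_all. Qed.

Section RestrictToComp.
Variables (S : {set V}) (r : V).
Let h := rel_on f (S :\ r).

Lemma walk_to_end_or_root x p : x \in S :\ r -> path f x p -> all (mem S) p ->
  connect h x (last x p) \/ exists2 a, connect h x a & f a r.
Proof.
elim: p x => [|y p IH] x HxSr /=; first by left; rewrite connect0.
move=> /andP[Hxy Hp] /andP[HyS HpS].
have [Eyr|Hyr] := eqVneq y r; first by right; exists x; rewrite ?connect0 -?Eyr.
have HySr : y \in S :\ r by rewrite !inE Hyr HyS.
have Hh : h x y by rewrite /h /rel_on /= Hxy HxSr HySr.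
case: (IH y HySr Hp HpS) => [Hy|[a Hya Ha]]; [left|right; exists a => //];
  exact: connect_trans (connect1 Hh) _.
Qed.

Lemma connect_in_comp A C x y :
  S \subset A -> is_comp e (A :\ r) C -> x \in C -> connect h x y -> y \in C.
Proof.
move=> SA HC HxC /connectP[p /rel_on_path[Hp HpSr] ->].
apply: all_last HxC (walk_in_comp HC HxC Hp _).
by apply/allP => z /(allP HpSr); rewrite !inE => /andP[-> /(subsetP SA)->].
Qed.

Lemma connect_setI_comp A C x y : S \subset A -> connected_on f S ->
  is_comp e (A :\ r) C -> x \in S :&: C -> y \in S :&: C -> connect h x y.
Proof.
move=> SA Sconn HC; have [CAr _] := HC.
have inSr z : z \in S :&: C -> z \in S :\ r.
  by rewrite !inE => /andP[-> /(subsetP CAr)]; rewrite !inE => /andP[->].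
move=> Hx Hy; have [HxS HxC] := setIP Hx; have [HyS HyC] := setIP Hy.
have [p [Hp [Hpl HpS]]] := Sconn x y HxS HyS.
have [q [Hq [Hql HqS]]] := Sconn y x HyS HxS.
have hsym : connect_sym h by apply/sym_connect_sym/rel_on_sym.
case: (walk_to_end_or_root (inSr x Hx) Hp HpS) => [|[a Hxa Har]]; first by rewrite Hpl.
case: (walk_to_end_or_root (inSr y Hy) Hq HqS) => [|[b Hyb Hbr]].
  by rewrite Hql hsym.
have HaC := connect_in_comp SA HC HxC Hxa; have HbC := connect_in_comp SA HC HyC Hyb.
have Eab := comp_unique_root_neighbour HC HaC HbC (f_sub_e Har) (f_sub_e Hbr).
by rewrite (connect_trans Hxa) // hsym Eab.
Qed.

Lemma connected_setI_comp A C : S \subset A -> connected_on f S ->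
  is_comp e (A :\ r) C -> connected_on f (S :&: C).
Proof.
move=> SA Sconn HC x y Hx Hy.
have /connectP[p Hp Hpl] := connect_setI_comp SA Sconn HC Hx Hy.
have [Hpf HpSr] := rel_on_path Hp; exists p; do 2!split => //.
have HpA : all (mem (A :\ r)) p.
  by apply/allP => z /(allP HpSr); rewrite !inE => /andP[-> /(subsetP SA)->].
have HpC := walk_in_comp HC (setIP Hx).2 Hpf HpA.
apply/allP => z Hz; move: (allP HpC z Hz) (allP HpSr z Hz) => /= HzC.
by rewrite !inE HzC andbT => /andP[].
Qed.

Lemma comp_setI_comp A C : S \subset A -> connected_on f S ->
  is_comp e (A :\ r) C -> S :&: C != set0 -> is_comp f (S :\ r) (S :&: C).
Proof.
move=> SA Sconn HC SC0; have [CAr [_ [_ Cclosed]]] := HC.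
split.
  apply/subsetP => x /setIP[HxS /(subsetP CAr)].
  by rewrite !inE HxS => /andP[->].
split=> //; split; first exact: connected_setI_comp SA Sconn HC.
move=> x y /setIP[HxS HxC]; rewrite !inE => /andP[Hyr HyS] Hxy.
by rewrite HyS (Cclosed x) ?f_sub_e // !inE Hyr (subsetP SA).
Qed.

End RestrictToComp.

Definition is_restriction t S TH :=
  search_tree f S TH /\
  forall v, v \in S -> forall u, in_path TH u v <-> in_path t u v /\ u \in S.

Lemma connected_sub_child A r ch S : search_tree e A (Node r ch) ->
  S \subset A -> r \notin S -> S != set0 -> connected_on f S ->
  exists2 c, List.In c ch & S \subset vset c.
Proof.
move=> Hst SA HrS /set0Pn[x HxS] Sconn; have [_ Hch _ _] := search_tree_Node Hst.
have SAr : forall z, z \in S -> z \in A :\ r.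
  by move=> z HzS; rewrite !inE (subsetP SA) // andbT; apply: contraNneq HrS => <-.
have : x \in vlist (Node r ch) by rewrite -vsetE (search_tree_vset esym Hst) (subsetP SA).
case/vlist_NodeP => [Exr|[c Hc Hxc]]; first by move: (SAr x HxS); rewrite Exr !inE eqxx.
exists c => //; have [HC _] := Hch c Hc; rewrite -vsetE in Hxc.
apply/subsetP => y HyS; have [p [Hp [<- HpS]]] := Sconn x y HxS HyS.
apply: all_last Hxc (walk_in_comp HC Hxc Hp _).
by apply/allP => z /(allP HpS) /SAr.
Qed.

Lemma restriction_of_child A r ch c S TH : search_tree e A (Node r ch) ->
  List.In c ch -> S \subset vset c -> is_restriction c S TH ->
  is_restriction (Node r ch) S TH.
Proof.
move=> Hst Hc Sc [HstTH Hpaths]; split=> // v HvS u; rewrite Hpaths //.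
have Hvc : v \in vlist c by rewrite -vsetE (subsetP Sc).
split=> -[Hp HuS]; split=> //; first exact: IP_child _ Hc Hp.
case/in_path_NodeP: Hp => [[Eu _]|[c' Hc' Hp]].
  by move: (search_tree_root_notin_child Hst Hc); rewrite -Eu -vsetE (subsetP Sc).
by rewrite (search_tree_child_uniq Hst Hc Hc' Hvc (in_path_memr Hp)).
Qed.

Section RootInSubgraph.
Variables (A S : {set V}) (r : V) (ch chH : seq (rtree V)).
Hypotheses (Hst : search_tree e A (Node r ch)) (SA : S \subset A).
Hypotheses (HrS : r \in S) (Sconn : connected_on f S).
Hypothesis restrict_children :
  List.Forall2 (fun c d => is_restriction c (S :&: vset c) d)
    [seq c <- ch | S :&: vset c != set0] chH.

Lemma restriction_of_meeting_child c : List.In c ch -> S :&: vset c != set0 ->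
  exists2 d, List.In d chH & is_restriction c (S :&: vset c) d.
Proof.
by move=> Hc Hmeet; apply: Forall2_In_l restrict_children _; apply/List.filter_In.
Qed.

Lemma restricted_child d : List.In d chH -> exists2 c, List.In c ch &
  [/\ is_comp f (S :\ r) (S :&: vset c), vset d = S :&: vset c &
      is_restriction c (S :&: vset c) d].
Proof.
case/(Forall2_In_r restrict_children) => c /List.filter_In[Hc Hmeet] Hrestr.
have [_ Hch _ _] := search_tree_Node Hst; have [HC _] := Hch c Hc.
exists c => //; split=> //; first exact: comp_setI_comp SA Sconn HC Hmeet.
exact: search_tree_vset fsym Hrestr.1.
Qed.

Lemma comp_minus_root_meets_child C : is_comp f (S :\ r) C ->
  exists2 c, List.In c ch & C = S :&: vset c.
Proof.
move=> HC; have [CSr [/set0Pn[x HxC] _]] := HC.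
have /setD1P[Hxr HxS] := subsetP CSr x HxC.
have : x \in vlist (Node r ch) by rewrite -vsetE (search_tree_vset esym Hst) (subsetP SA).
case/vlist_NodeP => [Exr|[c Hc Hxc]]; first by rewrite Exr eqxx in Hxr.
have HxSc : x \in S :&: vset c by rewrite inE HxS vsetE.
have [_ Hch _ _] := search_tree_Node Hst; have [Hc' _] := Hch c Hc.
have Hmeet : S :&: vset c != set0 by apply/set0Pn; exists x.
by exists c => //; apply: comp_eq HC (comp_setI_comp SA Sconn Hc' Hmeet) HxC HxSc.
Qed.

Lemma uniq_restricted_vsets :
  uniq [seq S :&: vset c | c <- [seq c <- ch | S :&: vset c != set0]].
Proof.
have [_ Hch _ Hu] := search_tree_Node Hst.
rewrite (_ : [seq _ | c <- _] =
  map (setI S) [seq X <- map (@vset V) ch | S :&: X != set0]); last first.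
  by rewrite filter_map -map_comp.
rewrite map_inj_in_uniq ?filter_uniq //.
move=> X Y; rewrite !mem_filter => /andP[/set0Pn[x HxSX] HX] /andP[_ HY] ESXY.
have /setIP[_ HxX] := HxSX; have /setIP[_ HxY] : x \in S :&: Y by rewrite -ESXY.
have [c1 Hc1 EX] := mem_map_In HX; have [c2 Hc2 EY] := mem_map_In HY; subst X Y.
have [HC1 _] := Hch c1 Hc1; have [HC2 _] := Hch c2 Hc2.
exact: comp_eq HC1 HC2 HxX HxY.
Qed.

Lemma search_tree_restricted_node : search_tree f S (Node r chH).
Proof.
apply: ST_node => // [d|C HC|].
- by case/restricted_child => c _ [HC -> [Hstd _]].
- have [c Hc EC] := comp_minus_root_meets_child HC.
  have Hmeet : S :&: vset c != set0 by rewrite -EC; case: HC => _ [].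
  have [d Hd [Hstd _]] := restriction_of_meeting_child Hc Hmeet.
  by exists d; rewrite (search_tree_vset fsym Hstd) EC.
rewrite (Forall2_map (g := fun c => S :&: vset c) _ restrict_children).
  exact: uniq_restricted_vsets.
by move=> c d [Hstd _]; apply: search_tree_vset fsym Hstd.
Qed.

Lemma in_path_restricted_node v : v \in S ->
  forall u, in_path (Node r chH) u v <-> in_path (Node r ch) u v /\ u \in S.
Proof.
move=> HvS u; have [_ Hch _ _] := search_tree_Node Hst.
have Hvset := search_tree_vset fsym search_tree_restricted_node.
split=> [/in_path_NodeP[[-> _]|[d Hd Hp]]|[/in_path_NodeP[[-> _]|[c Hc Hp]] HuS]].
- split=> //; apply: IP_root.
  by rewrite -vsetE (search_tree_vset esym Hst) (subsetP SA).
- have [c Hc [_ Evd [_ Hpaths]]] := restricted_child Hd.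
  have Hv : v \in S :&: vset c by rewrite -Evd vsetE (in_path_memr Hp).
  have [Hcp /setIP[HuS _]] := (Hpaths v Hv u).1 Hp.
  by split=> //; apply: IP_child _ Hc Hcp.
- by apply: IP_root; rewrite -vsetE Hvset.
- have Hv : v \in S :&: vset c by rewrite inE HvS vsetE (in_path_memr Hp).
  have Hmeet : S :&: vset c != set0 by apply/set0Pn; exists v.
  have [d Hd [_ Hpaths]] := restriction_of_meeting_child Hc Hmeet.
  apply: IP_child _ Hd _; apply/(Hpaths v Hv u); split=> //.
  by rewrite inE HuS vsetE (in_path_meml Hp).
Qed.

End RootInSubgraph.

Lemma restriction_exists t A S : search_tree e A t ->
  S \subset A -> S != set0 -> connected_on f S -> exists TH, is_restriction t S TH.
Proof.
elim/rtree_nested_ind: t A S => r ch IH A S Hst SA S0 Sconn.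
have [_ Hch _ _] := search_tree_Node Hst.
have [HrS|HrS] := boolP (r \in S).
- have [chH HchH] : exists chH, List.Forall2 (fun c d => is_restriction c (S :&: vset c) d)
      [seq c <- ch | S :&: vset c != set0] chH.
    apply: Forall2_exists => c /List.filter_In[Hc Hmeet]; have [HC Hstc] := Hch c Hc.
    exact: IH c Hc _ _ Hstc (subsetIr _ _) Hmeet (connected_setI_comp SA Sconn HC).
  exists (Node r chH); split.
  + exact: search_tree_restricted_node Hst SA HrS Sconn HchH.
  + exact: in_path_restricted_node Hst SA HrS Sconn HchH.
- have [c Hc Sc] := connected_sub_child Hst SA HrS S0 Sconn.
  have [_ Hstc] := Hch c Hc; have [TH HTH] := IH c Hc _ _ Hstc Sc S0 Sconn.
  by exists TH; apply: restriction_of_child Hst Hc Sc HTH.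
Qed.

End SubgraphOfTree.

Lemma restriction_unique (V : finType) (f : rel V) (t TH1 TH2 : rtree V) (S : {set V}) :
  symmetric f -> is_restriction f t S TH1 -> is_restriction f t S TH2 ->
  same_rtree TH1 TH2.
Proof.
move=> fsym [Hst1 Hpaths1] [Hst2 Hpaths2].
apply: (same_rtree_of_in_path Hst1 Hst2) => u v.
have [HvS|HvS] := boolP (v \in S); first by rewrite Hpaths1 // Hpaths2.
have notin TH : search_tree f S TH -> ~ in_path TH u v.
  by move=> Hst /in_path_memr; rewrite -vsetE (search_tree_vset fsym Hst) (negbTE HvS).
by split=> Hp; [case: (notin _ Hst1 Hp) | case: (notin _ Hst2 Hp)].
Qed.

Theorem mainTheorem13 (V : finType) (e : rel V) (T : rtree V)
    (S : {set V}) (f : rel V) :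
  is_tree e [set: V] ->
  search_tree e [set: V] T ->
  S != set0 ->
  (forall x y, f x y -> [/\ x \in S, y \in S & e x y]) ->
  (forall x y, f x y = f y x) ->
  connected_on f S ->
  exists TH : rtree V,
    (search_tree f S TH /\
     forall v, v \in S -> forall u, in_path TH u v <-> (in_path T u v /\ u \in S)) /\
    (forall TH' : rtree V,
       search_tree f S TH' ->
       (forall v, v \in S -> forall u, in_path TH' u v <-> (in_path T u v /\ u \in S)) ->
       same_rtree TH TH').
Proof.
move=> [esym [_ [_ [_ eacyclic]]]] HstT S0 Hf fsym Sconn.
have f_sub_e x y : f x y -> e x y by case/Hf.
have [TH HTH] :=
  restriction_exists esym eacyclic fsym f_sub_e HstT (subsetT S) S0 Sconn.
exists TH; split=> // TH' Hst' Hpaths'.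
exact: restriction_unique fsym HTH (conj Hst' Hpaths').
Qed.
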